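(* In the setting described in the context, assume $G$ satisfies Condition 1, and let $U=\max_{i}x_i(0)$ and $u=\min_i x_i(0)$, the max and min over non-faulty agents. Then for every non-faulty agent $i$ and every $t\ge1$, $$|y(t)-x_i(t)|\le(n-\phi)\max\{|u|,|U|\}\gamma^{\lceil t/\nu\rceil}+(n-\phi)L\sum_{r=1}^{t-1}\alpha(r-1)\gamma^{\lceil (t-r)/\nu\rceil}+2\alpha(t-1)L,$$ where the sum is $0$ when $t=1$.
   Context: A synchronous system of $n$ agents communicates over a directed graph $G=(\mathcal{V},\mathcal{E})$, $\mathcal{V}=\{1,\dots,n\}$, without self-loops; $N_i^-=\{j:(j,i)\in\mathcal{E}\}$. At most $f$ agents are Byzantine faulty (may send arbitrary, possibly inconsistent values); $\mathcal{F}$ is the set of faulty agents, $\phi=|\mathcal{F}|\le f$, non-faulty agents indexed $1,\dots,n-\phi$. Assignment matrix $\mathbf{A}\in\mathbb{R}^{k\times n}$: nonnegative entries, columns summing to $1$; agent $i$ holds $g_i=\sum_{j=1}^k\mathbf{A}_{ji}h_j$ for admissible (convex, $L$-Lipschitz, nonempty compact argmin) $h_1,\dots,h_k:\mathbb{R}\to\mathbb{R}$. Sparsity parameter $sp(\mathbf{A})$: smallest $s$ such that the sum of any $s$ columns of $\mathbf{A}$ is component-wise positive ($n+1$ if the sum of all columns is not). Reduced graph w.r.t. $\mathcal{F}$: subgraph of $G$ obtained by removing the nodes of $\mathcal{F}$ with their edges and then up to $f$ additional incoming edges at each remaining node; $R_{\mathcal{F}}$ the set of reduced graphs, $\tau=|R_{\mathcal{F}}|$.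 Source component: set of nodes each having a directed path to every other node of the graph. Condition 1: for every $\mathcal{F}'\subseteq\mathcal{V}$ with $|\mathcal{F}'|\le f$, every reduced graph w.r.t. $\mathcal{F}'$ has a source component with at least $\max\{f+1,sp(\mathbf{A})\}$ nodes. Step sizes: $\alpha(t)\ge0$ with $\alpha(t+1)\le\alpha(t)$, $\sum_t\alpha(t)=\infty$, $\sum_t\alpha^2(t)<\infty$. Algorithm 2: arbitrary $x_i(0)$; in iteration $t\ge1$ non-faulty agent $i$ sends $x_i(t-1)$ to all out-neighbors, receives $|N_i^-|$ values (default for missing), discards the $f$ smallest and $f$ largest, lets $N_i^*(t)$ be the senders of the remaining values with values $w_j$, sets $w_i=x_i(t-1)$, and updates $x_i(t)=\frac{1}{|N_i^*(t)|+1}\sum_{j\in\{i\}\cup N_i^*(t)}w_j-\alpha(t-1)d_i(t-1)$, $d_i(t-1)$ a subgradient of $g_i$ at $x_i(t-1)$. Known facts: with $\mathbf{x}(t)$ the non-faulty states and $\mathbf{d}(t)=(d_1(t),\dots,d_{n-\phi}(t))$, $\mathbf{x}(t+1)=\mathbf{M}(t)\mathbf{x}(t)-\alpha(t)\mathbf{d}(t)$ with row-stochastic $\mathbf{M}(t)$, and there is $0<\beta<1$ with $\mathbf{M}(t)\ge\beta\mathbf{H}(t)$ entrywise for the adjacency matrix $\mathbf{H}(t)$ (including diagonal ones) of some reduced graph in $R_{\mathcal{F}}$. Let $\Phi(t,r)=\mathbf{M}(t)\cdots\mathbf{M}(r)$ for $t\ge r$, $\Phi(t,t+1)=I$, $\nu=\tau(n-\phi)$,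 $\gamma=1-\beta^\nu$. Under Condition 1, for each $r$, $\lim_{t\to\infty}\Phi(t,r)=\mathbf{1}\pi(r)$ for a stochastic row vector $\pi(r)$, and $|\Phi_{ij}(t,r)-\pi_j(r)|\le\gamma^{\lceil (t-r+1)/\nu\rceil}$ for all $t\ge r$. Define $y(t)=\sum_{j=1}^{n-\phi}\pi_j(0)x_j(0)-\sum_{r=1}^{t}\alpha(r-1)\sum_{j=1}^{n-\phi}\pi_j(r)d_j(r-1)$. *)

From HB Require Import structures.
From mathcomp Require Import all_boot all_order all_algebra.
From mathcomp Require Import all_classical all_reals all_analysis.
Set Implicit Arguments. Unset Strict Implicit. Unset Printing Implicit Defensive.
Import Order.TTheory GRing.Theory Num.Theory.
Import numFieldNormedType.Exports.
Local Open Scope classical_set_scope.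
Local Open Scope ring_scope.

Section Defs.
Variable R : realType.

Definition ceil_div (a b : nat) : nat := ((a + b.-1) %/ b)%N.

Definition admissible (L : R) (h : R -> R) : Prop :=
  (forall (a b lam : R), 0 <= lam -> lam <= 1 ->
      h (lam * a + (1 - lam) * b) <= lam * h a + (1 - lam) * h b) /\
  (forall a b : R, `|h a - h b| <= L * `|a - b|) /\
  ([set x : R | forall y, h x <= h y] !=set0) /\
  compact [set x : R | forall y, h x <= h y].

Definition assignment (k n : nat) (A : 'M[R]_(k, n)) : Prop :=
  (forall j i, 0 <= A j i) /\ (forall i, \sum_j A j i = 1).

Definition gcost (k n : nat) (A : 'M[R]_(k, n)) (h : 'I_k -> R -> R)
  (i : 'I_n) (x : R) : R := \sum_(j < k) A j i * h j x.

Definition is_subgradient (g : R -> R) (x d : R) : Prop :=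
  forall y, g x + d * (y - x) <= g y.

Definition sp_ok (k n : nat) (A : 'M[R]_(k, n)) (s : nat) : bool :=
  [forall S : {set 'I_n}, (#|S| == s) ==> [forall j : 'I_k, 0 < \sum_(i in S) A j i]].

Definition sp (k n : nat) (A : 'M[R]_(k, n)) : nat :=
  \big[minn/n.+1]_(s < n.+1 | sp_ok A s) s.

Definition row_stochastic (m : nat) (M : 'M[R]_m) : Prop :=
  (forall i j, 0 <= M i j) /\ (forall i, \sum_j M i j = 1).

(** [Phi M r k] = M(r+k-1) ... M(r) (k factors); so Phi(t,r) = Phi M r (t-r+1) *)
Fixpoint Phi (m : nat) (M : nat -> 'M[R]_m) (r k : nat) : 'M[R]_m :=
  match k with
  | O => 1%:M
  | k'.+1 => M (r + k')%N *m Phi M r k'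
  end.

Definition is_max_of (m : nat) (v : 'I_m -> R) (U : R) : Prop :=
  (forall i, v i <= U) /\ (exists i, v i = U).
Definition is_min_of (m : nat) (v : 'I_m -> R) (u : R) : Prop :=
  (forall i, u <= v i) /\ (exists i, v i = u).

End Defs.

(** Graphs on V = 'I_n : a relation G (G j i means edge (j,i), j -> i). *)
Section Graphs.
Variable n : nat.

Definition reducedb (G : rel 'I_n) (f : nat) (F : {set 'I_n})
  (E' : {set 'I_n * 'I_n}) : bool :=
  [forall e in E', [&& e.1 \notin F, e.2 \notin F & G e.1 e.2]] &&
  [forall i, (i \notin F) ==>
     (#|[set j | [&& j \notin F, G j i & (j, i) \notin E']]| <= f)%N].

Definition has_source_component (F : {set 'I_n}) (E' : {set 'I_n * 'I_n}) (c : nat) : Prop :=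
  exists S : {set 'I_n}, [/\ S \subset ~: F, (c <= #|S|)%N &
    forall s v, s \in S -> v \notin F -> connect (fun a b => (a, b) \in E') s v].

Definition Condition1 (R : realType) (k : nat) (A : 'M[R]_(k, n)) (G : rel 'I_n) (f : nat) : Prop :=
  forall F' : {set 'I_n}, (#|F'| <= f)%N ->
  forall E' : {set 'I_n * 'I_n}, reducedb G f F' E' ->
  has_source_component F' E' (maxn f.+1 (sp A)).

Definition num_reduced (G : rel 'I_n) (f : nat) (F : {set 'I_n}) : nat :=
  #|[set E' : {set 'I_n * 'I_n} | reducedb G f F E']|.
End Graphs.

(** non-faulty agents are 1..n-phi, i.e. the first n-phi indices *)
Definition nf (n phi : nat) (i : 'I_(n - phi)) : 'I_n := widen_ord (leq_subr phi n) i.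
Definition faulty_set (n phi : nat) : {set 'I_n} := [set i : 'I_n | (n - phi <= i)%N].

From HB Require Import structures.
From mathcomp Require Import all_boot all_order all_algebra.
From mathcomp Require Import all_classical all_reals all_analysis.
From mathcomp Require Import ring lra.
Import Order.TTheory GRing.Theory Num.Theory.
Import numFieldNormedType.Exports.
Local Open Scope classical_set_scope.
Local Open Scope ring_scope.

(* Unrolling the recursion x(t+1) = M(t) x(t) - alpha(t) d(t) writes x(t) as
   Phi(t-1,0) x(0) minus the subgradient steps propagated by Phi(t-1,r), while
   y(t) is the same expression with every Phi(t-1,r) replaced by its limit
   1 pi(r).  The difference splits into the initial-state term, the propagated
   subgradient terms r < t (each entry of Phi - 1 pi is at most the geometric
   rate and |d| <= L), and the last step r = t, which Phi does not yet mix and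
   which contributes at most 2 alpha(t-1) L. *)

Lemma subgradient_norm_le (R : realType) (g : R -> R) (L x d : R) :
  (forall a b, `|g a - g b| <= L * `|a - b|) ->
  is_subgradient g x d -> `|d| <= L.
Proof.
move=> lip sg.
have := sg (x + 1); have := sg (x - 1).
have := lip (x + 1) x; have := lip (x - 1) x.
rewrite [x + 1]addrC [x - 1]addrC !addrK normrN normr1 !mulr1 mulrN1.
by rewrite !ler_norml => /andP[_ ?] /andP[_ ?] ? ?; apply/andP; split; lra.
Qed.

Lemma gcost_lipschitz (R : realType) (k n : nat) (A : 'M[R]_(k, n))
    (h : 'I_k -> R -> R) (L : R) (i : 'I_n) :
  assignment A -> (forall j, admissible L (h j)) ->
  forall a b, `|gcost A h i a - gcost A h i b| <= L * `|a - b|.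
Proof.
move=> [A_ge0 A_col] adm a b; rewrite /gcost -sumrB.
apply: le_trans (ler_norm_sum _ _ _) _.
apply: (@le_trans _ _ (\sum_(j < k) A j i * (L * `|a - b|))).
  apply: ler_sum => j _; rewrite -mulrBr normrM ger0_norm //.
  by apply: ler_wpM2l => //; case: (adm j) => _ [].
by rewrite -mulr_suml A_col mul1r.
Qed.

Lemma norm_le_max_bounds (R : realDomainType) (u v U : R) :
  u <= v -> v <= U -> `|v| <= Num.max `|u| `|U|.
Proof.
move=> uv vU; have := ler_norm U; have := ler_norm (- u); rewrite normrN.
have : `|u| <= Num.max `|u| `|U| by rewrite le_max lexx.
have : `|U| <= Num.max `|u| `|U| by rewrite le_max lexx orbT.
by move=> *; rewrite ler_norml; apply/andP; split; lra.
Qed.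

Lemma norm_sum_mul_le (R : realDomainType) (m : nat) (a b : 'I_m -> R) (A B : R) :
  (forall j, `|a j| <= A) -> (forall j, `|b j| <= B) ->
  `|\sum_j a j * b j| <= m%:R * A * B.
Proof.
move=> aA bB; apply: le_trans (ler_norm_sum _ _ _) _.
apply: (@le_trans _ _ (\sum_(j < m) A * B)).
  by apply: ler_sum => j _; rewrite normrM ler_pM.
by rewrite sumr_const card_ord mulr_natl mulrnAl.
Qed.

Lemma norm_convex_comb_le (R : realDomainType) (m : nat) (w v : 'I_m -> R) (B : R) :
  (forall j, 0 <= w j) -> \sum_j w j = 1 -> (forall j, `|v j| <= B) ->
  `|\sum_j w j * v j| <= B.
Proof.
move=> w_ge0 w_sum vB; apply: le_trans (ler_norm_sum _ _ _) _.
apply: (@le_trans _ _ (\sum_j w j * B)).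
  by apply: ler_sum => j _; rewrite normrM ger0_norm // ler_wpM2l.
by rewrite -mulr_suml w_sum mul1r.
Qed.

Lemma sum_mul_mxA (R : ringType) (m : nat) (a : 'I_m -> R) (P : 'M[R]_m)
    (v : 'I_m -> R) :
  \sum_j a j * \sum_l P j l * v l = \sum_l (\sum_j a j * P j l) * v l.
Proof.
under eq_bigr do rewrite big_distrr.
rewrite exchange_big; apply: eq_bigr => l _; rewrite mulr_suml.
by apply: eq_bigr => j _; rewrite /= mulrA.
Qed.

Lemma sum_mul_mx1 (R : ringType) (m : nat) (i : 'I_m) (v : 'I_m -> R) :
  \sum_j (1%:M : 'M[R]_m) i j * v j = v i.
Proof.
rewrite (bigD1 i) //= mxE eqxx mul1r big1 ?addr0 // => j /negbTE.
by rewrite mxE eq_sym => ->; rewrite mul0r.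
Qed.

Section TrackingError.
Variables (R : realType) (m : nat).
Variables (M : nat -> 'M[R]_m) (alpha : nat -> R) (x d : nat -> 'I_m -> R).
Hypothesis x_step : forall t i, x t.+1 i = \sum_j M t i j * x t j - alpha t * d t i.

Lemma x_closed_form t i :
  x t i = \sum_j Phi M 0 t i j * x 0%N j
    - \sum_(1 <= r < t.+1) alpha r.-1 * \sum_j Phi M r (t - r) i j * d r.-1 j.
Proof.
elim: t i => [|t IH] i; first by rewrite big_geq // subr0 sum_mul_mx1.
rewrite x_step; under eq_bigr do rewrite IH.
rewrite big_nat_recr //= subnn sum_mul_mx1.
under [X in _ = _ - (X + _)]eq_big_nat => r /andP[r_ge1 r_le].
  rewrite subSn // /= subnKC //; over.
rewrite /= add0n.
under [X in _ = X - _]eq_bigr do rewrite mxE.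
rewrite -(@sum_mul_mxA _ _ (M t i) (Phi M 0 t)).
under eq_bigr do rewrite mulrBr.
rewrite sumrB.
under [X in _ - X - _ = _]eq_bigr do rewrite big_distrr.
rewrite exchange_big /=.
under [X in _ - X - _ = _]eq_bigr => r _.
  under eq_bigr do rewrite mulrCA.
  rewrite -big_distrr /= sum_mul_mxA; over.
rewrite opprD addrA; congr (_ - _ - _); apply: eq_bigr => r _.
by congr (_ * _); apply: eq_bigr => l _; rewrite mxE.
Qed.

Variables (pi : nat -> 'I_m -> R) (rho : nat -> R) (K L : R).
Hypothesis alpha_ge0 : forall t, 0 <= alpha t.
Hypothesis pi_stochastic : forall r, (forall j, 0 <= pi r j) /\ \sum_j pi r j = 1.
Hypothesis Phi_rate : forall r k i j, `|pi r j - Phi M r k.+1 i j| <= rho k.+1.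
Hypothesis x0_bound : forall j, `|x 0%N j| <= K.
Hypothesis d_bound : forall t j, `|d t j| <= L.

Lemma initial_error_bound t i :
  `|\sum_j (pi 0%N j - Phi M 0 t.+1 i j) * x 0%N j| <= m%:R * K * rho t.+1.
Proof. by rewrite mulrAC; apply: norm_sum_mul_le. Qed.

Lemma propagated_error_bound s i :
  `|\sum_(1 <= r < s.+1) alpha r.-1 *
      \sum_j (pi r j - Phi M r (s.+1 - r) i j) * d r.-1 j|
  <= m%:R * L * \sum_(1 <= r < s.+1) alpha r.-1 * rho (s.+1 - r).
Proof.
apply: le_trans (ler_norm_sum _ _ _) _.
rewrite mulr_sumr; apply: ler_sum_nat => r /andP[_]; rewrite ltnS => r_le.
rewrite normrM ger0_norm // mulrCA ler_wpM2l // subSn // mulrAC.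
exact: norm_sum_mul_le.
Qed.

Lemma last_step_error_bound s i :
  `|alpha s * (\sum_j pi s.+1 j * d s j - d s i)| <= 2 * alpha s * L.
Proof.
rewrite normrM ger0_norm // [2 * _]mulrC -mulrA ler_wpM2l // mulr_natl mulr2n.
apply: le_trans (ler_normB _ _) _; apply: lerD (d_bound s i).
by case: (pi_stochastic s.+1) => pi_ge0 pi_sum; exact: norm_convex_comb_le.
Qed.

Lemma tracking_error_decomposition s i :
  (\sum_j pi 0%N j * x 0%N j
      - \sum_(1 <= r < s.+2) alpha r.-1 * \sum_j pi r j * d r.-1 j) - x s.+1 i
  = \sum_j (pi 0%N j - Phi M 0 s.+1 i j) * x 0%N j
    - \sum_(1 <= r < s.+1) alpha r.-1 *
        \sum_j (pi r j - Phi M r (s.+1 - r) i j) * d r.-1 j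
    - alpha s * (\sum_j pi s.+1 j * d s j - d s i).
Proof.
have initial : \sum_j (pi 0%N j - Phi M 0 s.+1 i j) * x 0%N j
    = \sum_j pi 0%N j * x 0%N j - \sum_j Phi M 0 s.+1 i j * x 0%N j.
  by rewrite -sumrB; apply: eq_bigr => j _; rewrite mulrBl.
have propagated : \sum_(1 <= r < s.+1) alpha r.-1 *
      \sum_j (pi r j - Phi M r (s.+1 - r) i j) * d r.-1 j
    = \sum_(1 <= r < s.+1) alpha r.-1 * \sum_j pi r j * d r.-1 j
      - \sum_(1 <= r < s.+1) alpha r.-1 * \sum_j Phi M r (s.+1 - r) i j * d r.-1 j.
  rewrite -sumrB; apply: eq_bigr => r _; rewrite -mulrBr -sumrB.
  by congr (_ * _); apply: eq_bigr => j _; rewrite mulrBl.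
rewrite x_closed_form initial propagated !(big_nat_recr s.+1) // subnn.
by rewrite sum_mul_mx1 /=; ring.
Qed.

Lemma tracking_error_bound t i : (1 <= t)%N ->
  `|(\sum_j pi 0%N j * x 0%N j
      - \sum_(1 <= r < t.+1) alpha r.-1 * \sum_j pi r j * d r.-1 j) - x t i|
  <= m%:R * K * rho t + m%:R * L * \sum_(1 <= r < t) alpha r.-1 * rho (t - r)
     + 2 * alpha t.-1 * L.
Proof.
case: t => [//|s] _; rewrite tracking_error_decomposition.
apply: le_trans (ler_normB _ _) _; rewrite lerD ?last_step_error_bound //.
apply: le_trans (ler_normB _ _) _.
by rewrite lerD ?initial_error_bound ?propagated_error_bound.
Qed.

End TrackingError.

Theorem lemma6 (R : realType) (n f phi k : nat) (G : rel 'I_n)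
  (A : 'M[R]_(k, n)) (h : 'I_k -> R -> R) (L : R) (alpha : nat -> R)
  (x d : nat -> 'I_(n - phi) -> R) (M : nat -> 'M[R]_(n - phi))
  (pi : nat -> 'I_(n - phi) -> R) (beta U u : R) :
  irreflexive G ->
  (phi <= f)%N -> (phi <= n)%N ->
  assignment A -> (forall j, admissible L (h j)) ->
  Condition1 A G f ->
  (forall t, 0 <= alpha t) -> (forall t, alpha t.+1 <= alpha t) ->
  series alpha @ \oo --> +oo ->
  cvg (series (fun t => alpha t ^+ 2) @ \oo) ->
  (* d_i(t) is a subgradient of g_i at x_i(t) *)
  (forall t i, is_subgradient (gcost A h (nf i)) (x t i) (d t i)) ->
  (* known facts: x(t+1) = M(t) x(t) - alpha(t) d(t), M(t) row-stochastic *)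
  (forall t, row_stochastic (M t)) ->
  (forall t i, x t.+1 i = \sum_j M t i j * x t j - alpha t * d t i) ->
  0 < beta -> beta < 1 ->
  (forall t, exists E' : {set 'I_n * 'I_n},
      reducedb G f (faulty_set n phi) E' /\
      forall i j, beta * (if (i == j) || ((nf j, nf i) \in E') then 1 else 0)
                  <= M t i j) ->
  let nu := (num_reduced G f (faulty_set n phi) * (n - phi))%N in
  let gamma := 1 - beta ^+ nu in
  (forall r i j, (fun s => Phi M r s i j) @ \oo --> pi r j) ->
  (forall r, (forall j, 0 <= pi r j) /\ \sum_j pi r j = 1) ->
  (forall r t i j, (r <= t)%N ->
      `|Phi M r (t - r).+1 i j - pi r j| <= gamma ^+ ceil_div (t - r).+1 nu) ->
  is_max_of (fun i => x 0%N i) U -> is_min_of (fun i => x 0%N i) u ->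
  let y := fun t : nat => \sum_j pi 0%N j * x 0%N j
       - \sum_(1 <= r < t.+1) alpha r.-1 * \sum_j pi r j * d r.-1 j in
  forall (i : 'I_(n - phi)) (t : nat), (1 <= t)%N ->
  `|y t - x t i| <=
     (n - phi)%:R * Num.max `|u| `|U| * gamma ^+ ceil_div t nu
     + (n - phi)%:R * L * \sum_(1 <= r < t) alpha r.-1 * gamma ^+ ceil_div (t - r) nu
     + 2 * alpha t.-1 * L.
Proof.
move=> _ _ _ HA Hadm _ alpha_ge0 _ _ _ d_subgrad _ x_step _ _ _ nu gamma _
  pi_stochastic Phi_rate [x0_le _] [x0_ge _] y i t t_ge1.
apply: (@tracking_error_bound _ _ M alpha x d x_step pi
  (fun k => gamma ^+ ceil_div k nu)) => //.
- move=> r s l j; have := Phi_rate r (r + s)%N l j (leq_addr s r).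
  by rewrite addKn distrC.
- by move=> j; apply: norm_le_max_bounds.
- move=> s j; apply: subgradient_norm_le (d_subgrad s j).
  exact: gcost_lipschitz.
Qed.
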